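(* With $T^+_{\mathrm{vl}},S^+_{\mathrm{vl}}$ as in the context, for all real $\gamma>0$, $M$, $a$ one has $$(T^+_{\mathrm{vl}})^2-4S^+_{\mathrm{vl}}=\frac{a^2(M+1)^2}{64\gamma^2(\gamma+1)^2}\,H(\gamma,M),$$ where $$\begin{aligned}H(\gamma,M)={}&(\gamma-1)^2\gamma^2M^6+(-2\gamma^4+4\gamma^3-2\gamma^2)M^5+(-5\gamma^4-2\gamma^3+19\gamma^2-12\gamma)M^4\\&+(20\gamma^4-44\gamma^2+24\gamma)M^3+(-13\gamma^4+26\gamma^3+39\gamma^2-24\gamma+36)M^2\\&+(-42\gamma^4-20\gamma^3-50\gamma^2-72\gamma-72)M+(57\gamma^4+26\gamma^3+53\gamma^2+84\gamma+36).\end{aligned}$$ Moreover $H(\gamma,M)>0$ for all $\gamma\in(1,3)$ and all $M\in[-1,1]$.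
   Context: Define, for real $\gamma,M,a$ with $\gamma>0$, $$T^+_{\mathrm{vl}}=\frac{a}{8\gamma(\gamma+1)}\Bigl[9\gamma(\gamma+1)-(\gamma-1)\gamma M^4+2(2\gamma^2+\gamma-3)M^2+12\gamma(\gamma+1)M+6\Bigr],$$ $$S^+_{\mathrm{vl}}=-\frac{a^2(M+1)^3}{32\gamma(\gamma+1)}\Bigl[-3\gamma^2-14\gamma+4(\gamma-1)\gamma M^2+(-9\gamma^2+10\gamma+3)M-3\Bigr].$$ *)

From Stdlib Require Import Reals.
Open Scope R_scope.

Definition Tvl (g M a : R) : R :=
  a / (8 * g * (g + 1)) *
  (9 * g * (g + 1) - (g - 1) * g * M ^ 4 + 2 * (2 * g ^ 2 + g - 3) * M ^ 2
   + 12 * g * (g + 1) * M + 6).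

Definition Svl (g M a : R) : R :=
  - (a ^ 2 * (M + 1) ^ 3) / (32 * g * (g + 1)) *
  (- 3 * g ^ 2 - 14 * g + 4 * (g - 1) * g * M ^ 2
   + (- 9 * g ^ 2 + 10 * g + 3) * M - 3).

Definition Hpoly (g M : R) : R :=
  (g - 1) ^ 2 * g ^ 2 * M ^ 6
  + (- 2 * g ^ 4 + 4 * g ^ 3 - 2 * g ^ 2) * M ^ 5
  + (- 5 * g ^ 4 - 2 * g ^ 3 + 19 * g ^ 2 - 12 * g) * M ^ 4
  + (20 * g ^ 4 - 44 * g ^ 2 + 24 * g) * M ^ 3
  + (- 13 * g ^ 4 + 26 * g ^ 3 + 39 * g ^ 2 - 24 * g + 36) * M ^ 2
  + (- 42 * g ^ 4 - 20 * g ^ 3 - 50 * g ^ 2 - 72 * g - 72) * M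
  + (57 * g ^ 4 + 26 * g ^ 3 + 53 * g ^ 2 + 84 * g + 36).

(* Positivity: in the variables s = g - 1 > 0 and t = 1 - M in [0, 2], H is a
   polynomial in s whose coefficients are polynomials in t that stay positive
   on [0, 2]; the negative terms are dominated using t^(k+1) <= 2 t^k. *)
From Stdlib Require Import Reals Lra Psatz.
Open Scope R_scope.

Lemma Tvl_Svl_discriminant (g M a : R) : 0 < g ->
  Tvl g M a ^ 2 - 4 * Svl g M a =
  a ^ 2 * (M + 1) ^ 2 / (64 * g ^ 2 * (g + 1) ^ 2) * Hpoly g M.
Proof. intros hg; unfold Tvl, Svl, Hpoly; field; lra. Qed.

Definition h0 (t : R) : R := 64 + 128 * t + 64 * t ^ 2.
Definition h1 (t : R) : R := 192 + 192 * t + 128 * t ^ 2 - 16 * t ^ 3.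
Definition h2 (t : R) : R :=
  208 + 128 * t + 160 * t ^ 2 - 8 * t ^ 3 - 12 * t ^ 4 - 4 * t ^ 5 + t ^ 6.
Definition h3 (t : R) : R :=
  96 + 96 * t + 72 * t ^ 2 + 8 * t ^ 3 - 12 * t ^ 4 - 8 * t ^ 5 + 2 * t ^ 6.
Definition h4 (t : R) : R := 16 + 32 * t + 12 * t ^ 2 - 4 * t ^ 5 + t ^ 6.

Lemma Hpoly_shift (s t : R) :
  Hpoly (1 + s) (1 - t) =
  h0 t + s * h1 t + s ^ 2 * h2 t + s ^ 3 * h3 t + s ^ 4 * h4 t.
Proof. unfold Hpoly, h0, h1, h2, h3, h4; ring. Qed.

Section Coefficients.

Variable t : R.
Hypothesis ht : 0 <= t <= 2.

Lemma pow_succ_le_twice (k : nat) : t ^ S k <= 2 * t ^ k.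
Proof.
  pose proof (pow_le t k (proj1 ht)); simpl; nra.
Qed.

Lemma h0_pos : 0 < h0 t.
Proof. unfold h0; nra. Qed.

Lemma h1_pos : 0 < h1 t.
Proof. pose proof (pow_succ_le_twice 2); unfold h1; nra. Qed.

Lemma h2_pos : 0 < h2 t.
Proof.
  pose proof (pow_succ_le_twice 2); pose proof (pow_succ_le_twice 3);
  pose proof (pow_succ_le_twice 4); pose proof (pow_le t 6 (proj1 ht)).
  unfold h2; nra.
Qed.

Lemma h3_pos : 0 < h3 t.
Proof.
  pose proof (pow_succ_le_twice 2); pose proof (pow_succ_le_twice 3);
  pose proof (pow_succ_le_twice 4); pose proof (pow_le t 6 (proj1 ht)).
  unfold h3; nra.
Qed.

Lemma h4_pos : 0 < h4 t.
Proof.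
  pose proof (pow_succ_le_twice 2); pose proof (pow_succ_le_twice 3);
  pose proof (pow_succ_le_twice 4); pose proof (pow_le t 6 (proj1 ht)).
  unfold h4; nra.
Qed.

End Coefficients.

Lemma Hpoly_pos (g M : R) : 1 < g -> -1 <= M <= 1 -> 0 < Hpoly g M.
Proof.
  intros hg hM.
  replace g with (1 + (g - 1)) by ring; replace M with (1 - (1 - M)) by ring.
  rewrite Hpoly_shift.
  set (s := g - 1); set (t := 1 - M).
  assert (hs : 0 < s) by (unfold s; lra).
  assert (ht : 0 <= t <= 2) by (unfold t; lra).
  pose proof (h0_pos t ht).
  pose proof (Rmult_lt_0_compat _ _ hs (h1_pos t ht)).
  pose proof (Rmult_lt_0_compat _ _ (pow_lt s 2 hs) (h2_pos t ht)).
  pose proof (Rmult_lt_0_compat _ _ (pow_lt s 3 hs) (h3_pos t ht)).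
  pose proof (Rmult_lt_0_compat _ _ (pow_lt s 4 hs) (h4_pos t ht)).
  lra.
Qed.

Theorem mainTheorem6 :
  (forall g M a : R, 0 < g ->
     (Tvl g M a) ^ 2 - 4 * Svl g M a =
     a ^ 2 * (M + 1) ^ 2 / (64 * g ^ 2 * (g + 1) ^ 2) * Hpoly g M) /\
  (forall g M : R, 1 < g < 3 -> -1 <= M <= 1 -> 0 < Hpoly g M).
Proof.
  split.
  - exact Tvl_Svl_discriminant.
  - intros g M hg; exact (Hpoly_pos g M (proj1 hg)).
Qed.
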